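(* Let $\mathcal H$ be a higraph and $k\ge1$. For any two paths $\rho,\rho'$ in $\mathcal H$, the number of $k$-step gluing sequences from $\rho$ to $\rho'$ is a multiple of $k!$.
   Context: A directed hypergraph $\mathcal H=(\mathcal V,\mathcal E)$ has edges $\varepsilon=(I,J)\in2^{\mathcal V}\times2^{\mathcal V}$, source $s(\varepsilon)=I$, target $t(\varepsilon)=J$. It is a higraph if for all edges $\varepsilon,\varepsilon'$: (Transitive) if $t(\varepsilon)\cap s(\varepsilon')\ne\emptyset$ then it equals $\{K\}$ for a single vertex $K$, the unions $s(\varepsilon)\cup(s(\varepsilon')\setminus\{K\})$ and $(t(\varepsilon)\setminus\{K\})\cup t(\varepsilon')$ are unions of disjoint sets, and their pair is an edge; (Acyclic) if $t(\varepsilon)\cap s(\varepsilon')$ and $t(\varepsilon')\cap s(\varepsilon)$ are both non-empty then $\varepsilon=\varepsilon'=(\{K\},\{K\})$ for some $K$. A path $\rho=(T,\rho)$ is a non-empty finite directed tree $T=(V,E)$ (digraph whose underlying undirected graph is a tree; elements of $V$ are nodes, of $E$ arrows, called breaks) with a map $\rho:V\to\mathcal E$ such that (1) for each arrow $e$, $t(\rho(s(e)))\cap s(\rho(t(e)))$ is a single vertex $\rho(e)$; (2) distinct arrows with the same source node or same target node have distinct $\rho(e)$. Paths related by a tree isomorphism compatible with labels are identified. For a subpath $\rho'$ (restriction to a subtree), $s(\rho')=\bigcup_v(s(\rho'(v))\setminus\{\rho'(e):t(e)=v\})$ and $t(\rho')=\bigcup_v(t(\rho'(v))\setminus\{\rho'(e):s(e)=v\})$.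 Gluing at a break $e$: $q(\rho,e)$ is the path whose tree is obtained by contracting the arrow $e$ to a single node $v^*$ (all other arrows kept, those incident to $e$'s endpoints now incident to $v^*$), with labels unchanged away from $v^*$ and $\rho(v^* )=(s(\rho'),t(\rho'))$ where $\rho'$ is the subpath on the two endpoints of $e$. A $k$-step gluing sequence on $\rho_1$ is a tuple $(e_1,\dots,e_k)$ with $e_i$ a break of $\rho_i$ and $\rho_{i+1}=q(\rho_i,e_i)$; it goes from $\rho_1$ to $\rho_{k+1}$. Sequences related by isomorphisms of the corresponding paths that identify the corresponding breaks are identified. *)

From mathcomp Require Import all_boot.
From mathcomp Require Import boolp classical_sets.

Set Implicit Arguments.
Unset Strict Implicit.
Unset Printing Implicit Defensive.

Local Open Scope classical_set_scope.

Section Higraph.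
Variable V : Type.

Definition hedge := (set V * set V)%type.
Definition hsrc (eps : hedge) : set V := eps.1.
Definition htgt (eps : hedge) : set V := eps.2.

Definition transitive_hg (E : set hedge) : Prop :=
  forall eps eps', E eps -> E eps' ->
    htgt eps `&` hsrc eps' !=set0 ->
    exists K : V,
      htgt eps `&` hsrc eps' = [set K] /\
      [disjoint hsrc eps & hsrc eps' `\ K] /\
      [disjoint htgt eps `\ K & htgt eps'] /\
      E (hsrc eps `|` (hsrc eps' `\ K), (htgt eps `\ K) `|` htgt eps').

Definition acyclic_hg (E : set hedge) : Prop :=
  forall eps eps', E eps -> E eps' ->
    htgt eps `&` hsrc eps' !=set0 -> htgt eps' `&` hsrc eps !=set0 ->
    eps = eps' /\ exists K : V, eps = ([set K], [set K]).

Definition higraph (E : set hedge) : Prop := transitive_hg E /\ acyclic_hg E.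

Record ptree (N : finType) := PTree {
  pnodes : {set N};
  parrows : {set N * N};
  plab : N -> hedge
}.

Section Paths.
Variable N : finType.
Implicit Types (r : ptree N).

Definition uadj r : rel N := fun x y => ((x, y) \in parrows r) || ((y, x) \in parrows r).

(** the underlying undirected graph is a tree: non-empty, connected, acyclic
    (no loops, no pair of opposite arrows = no 2-cycles, no simple cycles of
    length >= 3). *)
Definition directed_tree r : Prop :=
  (pnodes r != finset.set0) /\
  [/\ {in parrows r, forall a, (a.1 \in pnodes r) && (a.2 \in pnodes r)},
      {in parrows r, forall a, a.1 != a.2},
      {in parrows r, forall a, (a.2, a.1) \notin parrows r},
      {in pnodes r &, forall x y, connect (uadj r) x y} &
      forall c : seq N, 3 <= size c -> ~~ ucycleb (uadj r) c].

Definition brkset r (e : N * N) : set V := htgt (plab r e.1) `&` hsrc (plab r e.2).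

Definition is_path (E : set hedge) r : Prop :=
  [/\ directed_tree r,
      {in pnodes r, forall v, E (plab r v)},
      {in parrows r, forall e, exists K : V, brkset r e = [set K]} &
      (* (2) *)
      {in parrows r &, forall e e', e != e' ->
          (e.1 = e'.1 \/ e.2 = e'.2) -> brkset r e <> brkset r e'}].

Definition sub_src r (S : {set N}) : set V :=
  [set x | exists2 v, v \in S & hsrc (plab r v) x /\
     ~ (exists2 e, (e \in parrows r) && (e.1 \in S) & e.2 = v /\ brkset r e x)].

Definition sub_tgt r (S : {set N}) : set V :=
  [set x | exists2 v, v \in S & htgt (plab r v) x /\
     ~ (exists2 e, (e \in parrows r) && (e.2 \in S) & e.1 = v /\ brkset r e x)].

(** gluing at the break e = (u, w): the arrow e is contracted to the node u
    (which plays the role of the new node v-star), the node w is removed, arrows incident to w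
    are redirected to u, and u is relabelled by (s(rho'), t(rho')) where rho'
    is the subpath on {u, w}. *)
Definition glue r (e : N * N) : ptree N :=
  let u := e.1 in let w := e.2 in
  let ren := fun x : N => if x == w then u else x in
  PTree (pnodes r :\ w)%SET
        [set (ren a.1, ren a.2) | a in (parrows r :\ e)%SET]%SET
        (fun x => if x == u then (sub_src r [set u; w]%SET, sub_tgt r [set u; w]%SET)
                  else plab r x).

Fixpoint is_glue_seq r (s : seq (N * N)) : Prop :=
  match s with
  | [::] => True
  | e :: s' => e \in parrows r /\ is_glue_seq (glue r e) s'
  end.

Fixpoint glue_end r (s : seq (N * N)) : ptree N :=
  match s with
  | [::] => r
  | e :: s' => glue_end (glue r e) s'
  end.

End Paths.

Definition is_iso (N1 N2 : finType) (f : N1 -> N2) (r1 : ptree N1) (r2 : ptree N2) : Prop :=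
  [/\ {in pnodes r1 &, injective f},
      (f @: pnodes r1)%SET = pnodes r2,
      [set (f a.1, f a.2) | a in parrows r1]%SET = parrows r2 &
      {in pnodes r1, forall x, plab r2 (f x) = plab r1 x}].

Definition iso_ptree (N1 N2 : finType) (r1 : ptree N1) (r2 : ptree N2) : Prop :=
  exists f : N1 -> N2, is_iso f r1 r2.

Fixpoint seq_ident (N : finType) (r1 : ptree N) (s1 : seq (N * N))
    (r2 : ptree N) (s2 : seq (N * N)) : Prop :=
  match s1, s2 with
  | [::], [::] => iso_ptree r1 r2
  | e1 :: s1', e2 :: s2' =>
      (exists f : N -> N, is_iso f r1 r2 /\ (f e1.1, f e1.2) = e2) /\
      seq_ident (glue r1 e1) s1' (glue r2 e2) s2'
  | _, _ => False
  end.

Definition glue_seqs (N N' : finType) (r : ptree N) (r' : ptree N') (k : nat)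
  : {set k.-tuple (N * N)} :=
  [set s : k.-tuple (N * N) | `[< is_glue_seq r s /\ iso_ptree (glue_end r s) r' >] ]%SET.

Definition num_glue_seqs (N N' : finType) (r : ptree N) (r' : ptree N') (k : nat) : nat :=
  #|[set [set t in glue_seqs r r' k | `[< seq_ident r s r t >] ]%SET
       | s : k.-tuple (N * N) in glue_seqs r r' k]%SET|.

End Higraph.

(* Encode the path reached after gluing a set X of breaks of [r] as the quotient of [r]
   by the components of X: each node stands for a block of nodes of [r], labelled by the
   source and target of the subpath on that block, which is an edge of the higraph by
   transitivity. A k-step gluing sequence from [r] is then the same thing as a
   duplicate-free sequence of k breaks of [r], and its end path depends only on the set
   of these breaks, so the sequences ending at [r'] come in full orbits of the k!
   permutations. Identification of gluing sequences is trivial: an automorphism of a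
   finite directed tree fixes a node, and condition (2) forces it to fix the neighbours
   of every fixed node, so paths have no nontrivial automorphism. *)

From mathcomp Require Import all_boot.
From mathcomp Require Import boolp classical_sets.

Set Implicit Arguments.
Unset Strict Implicit.
Unset Printing Implicit Defensive.

Lemma dvdn_fact_card_perm_closed (T : finType) k (O : {set k.-tuple T}) :
  {in O, forall a : k.-tuple T, uniq a} ->
  (forall (a b : k.-tuple T), a \in O -> perm_eq a b -> b \in O) ->
  k`! %| #|O|.
Proof.
move=> Ouniq Operm.
rewrite -sum1_card (partition_big (fun a : k.-tuple T => [set x in a]) predT) //=.
apply: dvdn_sum => S _; rewrite sum1dep_card.
have [a0 /andP[a0O /eqP a0S]|none] :=
  pickP (fun a => (a \in O) && ([set x in a] == S)); last first.
  by rewrite eq_card0 ?dvdn0 // => a; rewrite inE none.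
have card_set (t : seq T) : uniq t -> #|[set x in t]| = size t.
  by move=> /card_uniqP <-; rewrite cardsE.
have cS : #|S| = k by rewrite -a0S card_set ?Ouniq ?size_tuple.
rewrite (_ : [set a | _] = [set t : k.-tuple T | all [in S] t & uniq t]).
  by rewrite card_uniq_tuples (eq_card (B := S)) ?cS ?ffactnn.
apply/setP => t; rewrite !inE; apply/andP/andP => [[tO /eqP <-]|[/allP tS ut]].
  by split; [apply/allP => x; rewrite /= inE | apply: Ouniq].
have tS' : [set x in t] = S.
  apply/eqP; rewrite finset.eqEcard card_set // size_tuple cS leqnn andbT.
  by apply/fintype.subsetP => x; rewrite inE => /tS.
split; last by rewrite tS'.
apply: (Operm a0 t a0O); apply: uniq_perm (Ouniq _ a0O) ut _ => x.
by have /setP/(_ x) := etrans a0S (esym tS'); rewrite !inE.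
Qed.

Section Trees.
Variable N : finType.
Implicit Types (S : {set N}) (A X Y : {set N * N}).

Definition arrow_adj A : rel N := fun x y => ((x, y) \in A) || ((y, x) \in A).

Lemma arrow_adj_sym A : symmetric (arrow_adj A).
Proof. by move=> x y; rewrite /arrow_adj orbC. Qed.

Lemma connect_arrow_adjC A x y :
  connect (arrow_adj A) x y = connect (arrow_adj A) y x.
Proof. exact: (sym_connect_sym (arrow_adj_sym A)). Qed.

Lemma arrow_adj_arrow A a : a \in A -> arrow_adj A a.1 a.2.
Proof. by rewrite /arrow_adj -surjective_pairing => ->. Qed.

Lemma arrow_adj_arrowC A a : a \in A -> arrow_adj A a.2 a.1.
Proof. by move=> aA; rewrite arrow_adj_sym arrow_adj_arrow. Qed.

Lemma arrow_adjS X Y : X \subset Y -> subrel (arrow_adj X) (arrow_adj Y).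
Proof.
by move=> /fintype.subsetP sXY x y /orP[/sXY|/sXY]; rewrite /arrow_adj => ->; rewrite ?orbT.
Qed.

Lemma connect_arrow_adjS X Y x y :
  X \subset Y -> connect (arrow_adj X) x y -> connect (arrow_adj Y) x y.
Proof. by move=> sXY; apply: connect_sub => u v /(arrow_adjS sXY)/connect1. Qed.

Definition is_tree S A :=
  [/\ {in A, forall e, (e.1 \in S) && (e.2 \in S)},
      {in S &, forall x y, connect (arrow_adj A) x y} &
      {in A, forall e, ~~ connect (arrow_adj (A :\ e)) e.1 e.2}].

Definition tree_auto (f : N -> N) S A :=
  [/\ {in S &, injective f}, f @: S = S & [set (f a.1, f a.2) | a in A] = A].

Definition neighbours A x := [set y | arrow_adj A x y].

Section TreeFacts.
Variables (S : {set N}) (A : {set N * N}).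
Hypothesis tS : is_tree S A.

Lemma tree_arrow_in e : e \in A -> e.1 \in S /\ e.2 \in S.
Proof. by case: tS => h _ _ /h /andP. Qed.

Lemma tree_adj_in x y : arrow_adj A x y -> x \in S /\ y \in S.
Proof. by case/orP=> /tree_arrow_in [] /= ? ?. Qed.

Lemma tree_bridge e : e \in A -> ~ connect (arrow_adj (A :\ e)) e.1 e.2.
Proof. by case: tS => _ _ hb /hb /negP. Qed.

Lemma tree_arrow_neq e : e \in A -> e.1 != e.2.
Proof. by move=> eA; apply: contra_notN (tree_bridge eA) => /eqP->. Qed.

Lemma tree_no_loop x : (x, x) \notin A.
Proof. by apply/negP => /tree_arrow_neq /=; rewrite eqxx. Qed.

Lemma tree_no_opp e : e \in A -> (e.2, e.1) \notin A.
Proof.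
move=> eA; apply/negP => oA; apply: (tree_bridge eA); apply: connect1.
apply/orP; right; rewrite !inE oA andbT.
by apply: contra_neq (tree_arrow_neq eA) => /(congr1 fst).
Qed.

Variable f : N -> N.
Hypothesis af : tree_auto f S A.

Lemma tree_auto_in x : x \in S -> f x \in S.
Proof. by case: af => _ h _ xS; rewrite -h imset_f. Qed.

Lemma tree_auto_onto y : y \in S -> exists2 x, x \in S & y = f x.
Proof. by case: af => _ h _; rewrite -{1}h => /imsetP. Qed.

Lemma tree_auto_arrow x y :
  x \in S -> y \in S -> ((f x, f y) \in A) = ((x, y) \in A).
Proof.
case: af => fi _ hA xS yS; apply/idP/idP => [|xyA]; last first.
  by rewrite -hA; apply/imsetP; exists (x, y).
rewrite -{1}hA => /imsetP [a aA [e1 e2]]; have [a1S a2S] := tree_arrow_in aA.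
by rewrite (fi _ _ xS a1S e1) (fi _ _ yS a2S e2) -surjective_pairing.
Qed.

Lemma tree_auto_adj x y :
  x \in S -> y \in S -> arrow_adj A (f x) (f y) = arrow_adj A x y.
Proof. by move=> xS yS; rewrite /arrow_adj !tree_auto_arrow. Qed.

Lemma card_neighbours_auto x : x \in S -> #|neighbours A (f x)| = #|neighbours A x|.
Proof.
move=> xS; have -> : neighbours A (f x) = f @: neighbours A x.
  apply/setP => y; rewrite inE; apply/idP/imsetP => [fxy|[z]].
    have [_ /tree_auto_onto[z zS yE]] := tree_adj_in fxy.
    by exists z; rewrite // inE -(tree_auto_adj xS zS) -yE.
  by rewrite inE => xz ->; have [_ zS] := tree_adj_in xz; rewrite tree_auto_adj.
rewrite card_in_imset // => y z; rewrite !inE => /tree_adj_in[_ yS] /tree_adj_in[_ zS].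
by case: af => fi _ _; apply: fi.
Qed.

End TreeFacts.

Section Leaves.
Variables (S : {set N}) (A : {set N * N}).
Hypothesis tS : is_tree S A.

Lemma tree_adj_arrow x z :
  arrow_adj A x z -> exists2 c, c \in A & (c = (x, z) \/ c = (z, x)).
Proof. by case/orP=> h; [exists (x, z); last left | exists (z, x); last right]. Qed.

Lemma tree_no_cycle x y z q :
  arrow_adj A x y -> arrow_adj A x z -> y != z ->
  path (arrow_adj A) y q -> last y q = z -> x \notin y :: q -> False.
Proof.
move=> xy xz yz pq lq xq; have [c cA cE] := tree_adj_arrow xz.
have outc u v : arrow_adj A u v -> (u, v) != c -> (v, u) != c -> arrow_adj (A :\ c) u v.
  by move=> /orP[] uvA uv vu; apply/orP; [left|right]; rewrite !inE uvA andbT.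
have yx : y != x by apply: contraNneq xq => ->; rewrite mem_head.
have xyc : arrow_adj (A :\ c) x y.
  by apply: (outc _ _ xy); case: cE => ->; rewrite xpair_eqE negb_and ?yz ?yx ?orbT.
have yzc : connect (arrow_adj (A :\ c)) y z.
  apply/connectP; exists q => //; apply: (sub_in_path (P := predC1 x)) pq; last first.
    by apply/allP => v /=; apply: contraTneq => ->.
  by move=> u v /[!inE] ux vx uv; apply: (outc _ _ uv); case: cE => ->;
    rewrite xpair_eqE negb_and ?ux ?vx ?orbT.
apply: (tree_bridge tS cA).
by case: cE (connect_trans (connect1 xyc) yzc) => -> //=; rewrite connect_arrow_adjC.
Qed.

Lemma maximal_tree_path :
  S != finset.set0 -> exists x p, [/\ x \in S, uniq (x :: p), path (arrow_adj A) x p &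
                              forall z, arrow_adj A x z -> z \in p].
Proof.
case/set0Pn => x0 x0S.
pose P m := `[< exists x p, [/\ x \in S, uniq (x :: p), path (arrow_adj A) x p & size p = m] >].
have P0 : exists m, P m by exists 0; apply/asboolP; exists x0, [::].
have Pbound m : P m -> m <= #|N|.
  by case/asboolP=> [x [p [_ /card_uniqP /= up _ <-]]]; apply: ltnW; rewrite -up max_card.
case: (ex_maxnP P0 Pbound) => m /asboolP [x [p [xS up pp <-]]] pmax.
exists x, p; split=> // z xz; apply/negPn/negP => zp.
have zx : z != x by apply: contraNneq (tree_no_loop tS x) => zx; rewrite zx /arrow_adj orbb in xz.
suff /pmax : P (size p).+1 by rewrite ltnn.
apply/asboolP; exists z, (x :: p); split => //.
- by have [] := tree_adj_in tS xz.
- by rewrite cons_uniq up inE negb_or zx zp.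
- by rewrite /= pp andbT arrow_adj_sym.
Qed.

Lemma tree_leaf_exists : S != finset.set0 -> exists2 x, x \in S & #|neighbours A x| <= 1.
Proof.
case/maximal_tree_path => x [[|y p]] [xS up pp nbx]; exists x => //.
  rewrite (_ : neighbours A x = finset.set0) ?cards0 //.
  by apply/setP => z; rewrite !inE; apply/negP => /nbx.
apply/card_le1_eqP => z1 z2; rewrite !inE => xz1 xz2.
suff yz z : arrow_adj A x z -> z = y by rewrite (yz _ xz1) (yz _ xz2).
move=> xz; apply/eqP/negPn/negP => zy; move: pp up => /= /andP[xy].
have /path.splitP[p1 p2] : z \in p by move: (nbx _ xz); rewrite inE (negbTE zy).
rewrite cat_path => /andP[pp1 _] /and3P[/[!(inE, mem_cat)] /norP[xny /norP[xp1 _]] _ _].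
by apply: (tree_no_cycle xy xz _ pp1 (last_rcons _ _ _)); rewrite 1?eq_sym // inE negb_or xny.
Qed.

End Leaves.

Definition interior S A := [set x in S | 1 < #|neighbours A x|].
Definition interior_arrows S A :=
  [set e in A | (e.1 \in interior S A) && (e.2 \in interior S A)].

Section Interior.
Variables (S : {set N}) (A : {set N * N}).
Hypothesis tS : is_tree S A.
Local Notation I := (interior S A).
Local Notation IA := (interior_arrows S A).

Lemma interior_sub x : x \in I -> x \in S.
Proof. by rewrite inE => /andP[]. Qed.

(* Inner nodes of a simple path have degree at least two; the disjunction is the
   induction invariant. *)
Lemma simple_path_interior x p :
  (x \in I \/ exists2 w, arrow_adj A w x & w \notin x :: p) -> uniq (x :: p) ->
  path (arrow_adj A) x p -> last x p \in I -> path (arrow_adj IA) x p /\ x \in I.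
Proof.
elim: p x => [|y p IHp] x xI up; first by move=> _ /= ->.
move=> /= /andP[xy pp] lI.
have xIn : x \in I.
  case: xI => // -[w wx wp]; rewrite inE (proj1 (tree_adj_in tS xy)) /=.
  apply/card_gt1P; exists y, w; rewrite !inE xy arrow_adj_sym wx.
  by split=> //; apply: contraNneq wp => ->; rewrite !inE eqxx orbT.
have [pyI yI] : path (arrow_adj IA) y p /\ y \in I.
  move: up; rewrite cons_uniq => /andP[xp up].
  by apply: IHp => //; right; exists x.
split => //=; rewrite pyI andbT.
by case/orP: xy => h; apply/orP; [left|right]; rewrite inE /= h xIn yI.
Qed.

Lemma interior_tree : is_tree I IA.
Proof.
case: tS => _ conn bridge; split.
- by move=> e; rewrite inE => /andP[].
- move=> x y xI yI; have /connectP[p pp yE] := conn _ _ (interior_sub xI) (interior_sub yI).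
  rewrite yE in yI *; case/shortenP: pp yI => q pq uq _ lI.
  by apply/connectP; exists q => //; case: (simple_path_interior (or_introl xI) uq pq lI).
- move=> e /[!inE] /andP[eA _]; apply: contra (bridge e eA); apply: connect_arrow_adjS.
  by apply: finset.setSD; apply/fintype.subsetP => d; rewrite inE => /andP[].
Qed.

Variable f : N -> N.
Hypothesis af : tree_auto f S A.

Lemma interior_auto_mem x : x \in S -> (f x \in I) = (x \in I).
Proof. by move=> xS; rewrite !inE xS (tree_auto_in af xS) (card_neighbours_auto tS af). Qed.

Lemma interior_auto : tree_auto f I IA.
Proof.
case: (af) => fi _ fA; split.
- by move=> x y /interior_sub xS /interior_sub yS; apply: fi.
- apply/setP => y; apply/imsetP/idP => [[x xI ->]|yI].
    by rewrite interior_auto_mem ?interior_sub.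
  have [x xS yE] := tree_auto_onto af (interior_sub yI).
  by exists x; rewrite // -(interior_auto_mem xS) -yE.
- apply/setP => e; apply/imsetP/idP => [[a /[1!inE] /andP[aA /andP[a1 a2]] ->]|].
    have [a1S a2S] := tree_arrow_in tS aA.
    rewrite 1!inE /= !interior_auto_mem // a1 a2 /= andbT -fA.
    by apply/imsetP; exists a.
  rewrite 1!inE => /andP[]; rewrite -{1}fA => /imsetP[a aA ->] /=.
  have [a1S a2S] := tree_arrow_in tS aA.
  by rewrite !interior_auto_mem // => a12; exists a; rewrite // 1!inE aA.
Qed.

Lemma card_interior_lt : S != finset.set0 -> #|I| < #|S|.
Proof.
move=> /(tree_leaf_exists tS)[x xS x1]; apply: proper_card; apply/properP.
split; first by apply/fintype.subsetP => y /interior_sub.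
by exists x => //; rewrite inE xS -leqNgt.
Qed.

(* When every node has degree at most one the tree is a node or a single arrow, and
   an automorphism cannot swap the ends of an arrow. *)
Lemma interior0_auto_fixpoint :
  I = finset.set0 -> S != finset.set0 -> exists2 x, x \in S & f x = x.
Proof.
move=> I0 /set0Pn[x xS].
have leaf y : y \in S -> #|neighbours A y| <= 1.
  by move=> yS; rewrite leqNgt; apply: contraFN (finset.in_set0 y) => ?; rewrite -I0 inE yS.
have [nx0|/set0Pn[y]] := eqVneq (neighbours A x) finset.set0.
  exists x => //; case: tS => _ conn _.
  case/connectP: (conn _ _ xS (tree_auto_in af xS)) => [[|y p] //= /andP[xy _] _].
  by move: nx0 => /setP/(_ y); rewrite !inE xy.
rewrite inE => xy; have [_ yS] := tree_adj_in tS xy.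
have only_y z : arrow_adj A x z -> z = y.
  by move=> xz; move/card_le1_eqP: (leaf _ xS); apply; rewrite inE.
have only_x z : arrow_adj A y z -> z = x.
  by move=> yz; move/card_le1_eqP: (leaf _ yS); apply; rewrite inE // arrow_adj_sym.
have ends q u : u \in [:: x; y] -> path (arrow_adj A) u q -> last u q \in [:: x; y].
  elim: q u => [|v q IHq] u //= uxy /andP[uv vq]; apply: IHq vq.
  by move: uxy; rewrite !inE => /orP[]/eqP uE; rewrite uE in uv;
    [rewrite (only_y _ uv) eqxx orbT | rewrite (only_x _ uv) eqxx].
case: tS => _ conn _; case/connectP: (conn _ _ xS (tree_auto_in af xS)) => p px fxE.
have := ends p x (mem_head _ _) px; rewrite -fxE !inE => /orP[]/eqP fx; first by exists x.
have fy : f y = x by apply: only_x; rewrite -{1}fx (tree_auto_adj tS af xS yS).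
case/orP: xy => [xyA|yxA].
  by move: (tree_no_opp tS xyA); rewrite /= -{1}fy -{1}fx (tree_auto_arrow tS af xS yS) xyA.
by move: (tree_no_opp tS yxA); rewrite /= -{1}fx -{1}fy (tree_auto_arrow tS af yS xS) yxA.
Qed.

End Interior.

Lemma tree_auto_fixpoint (S : {set N}) (A : {set N * N}) (f : N -> N) :
  is_tree S A -> tree_auto f S A -> S != finset.set0 -> exists2 x, x \in S & f x = x.
Proof.
move: {2}#|S| (leqnn #|S|) => n; elim: n S A => [|n IHn] S A Sn tS af S0.
  by move: Sn; rewrite leqn0 cards_eq0 (negbTE S0).
have [I0|IS0] := eqVneq (interior S A) finset.set0.
  exact: (interior0_auto_fixpoint tS af I0 S0).
have In : #|interior S A| <= n by rewrite -ltnS (leq_trans (card_interior_lt tS S0)).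
have [x /interior_sub xS fx] := IHn _ _ In (interior_tree tS) (interior_auto tS af) IS0.
by exists x.
Qed.

Definition label_separated (L : Type) (lab : N -> L) A :=
  {in A &, forall e e', e != e' -> e.1 = e'.1 \/ e.2 = e'.2 ->
     (lab e.1, lab e.2) <> (lab e'.1, lab e'.2)}.

Lemma tree_auto_rigid (L : Type) (lab : N -> L) S A (f : N -> N) :
  is_tree S A -> tree_auto f S A -> {in S, forall x, lab (f x) = lab x} ->
  label_separated lab A -> {in S, forall x, f x = x}.
Proof.
move=> tS af flab sep z zS.
have [x0 x0S fx0] : exists2 x0, x0 \in S & f x0 = x0.
  by apply: tree_auto_fixpoint tS af _; apply/set0Pn; exists z.
case: (tS) => _ conn _; case/connectP: (conn _ _ x0S zS) => p + ->.
elim: p x0 x0S fx0 => [|v p IHp] u uS fu //= /andP[uv pv].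
have vS : v \in S by have [] := tree_adj_in tS uv.
apply: IHp => //; apply/eqP; apply/negP => /negP fvv.
case/orP: uv => [uvA|vuA].
  have ufvA : (u, f v) \in A by rewrite -{1}fu (tree_auto_arrow tS af uS vS).
  apply: (sep _ _ uvA ufvA); [by rewrite xpair_eqE eqxx eq_sym | by left | ].
  by rewrite /= flab.
have fvuA : (f v, u) \in A by rewrite -{1}fu (tree_auto_arrow tS af vS uS).
apply: (sep _ _ vuA fvuA); [by rewrite xpair_eqE eqxx andbT eq_sym | by right | ].
by rewrite /= flab.
Qed.

End Trees.

Lemma directed_tree_is_tree (V : Type) (N : finType) (r : ptree V N) :
  directed_tree r -> is_tree (pnodes r) (parrows r).
Proof.
case=> _ [arrows_in neq no_opp conn no_cycle]; split=> // -[x y] /= xyA; apply/negP.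
case/connectP=> p pp lp; case/shortenP: pp lp => q pq uq _ lq.
apply: (negP (no_cycle (x :: q) _)).
  case: q pq uq lq => [|z [|z' q]] //=; first by move=> _ _ yx; move: (neq _ xyA); rewrite yx eqxx.
  move=> /andP[/orP[] + _] _ yz; rewrite -yz !inE ?eqxx // => /andP[_ yxA].
  by move: (no_opp _ xyA); rewrite yxA.
rewrite /ucycleb uq andbT /cycle rcons_path -lq /uadj xyA orbT andbT.
by apply: sub_path pq => u v /orP[] /[!inE] /andP[_ ->]; rewrite ?orbT.
Qed.

Section Blocks.
Variables (V : Type) (N : finType) (r : ptree V N).
Implicit Types (S P Q : {set N}).
Local Notation A0 := (parrows r).
Local Notation brk := (brkset r).

(* [x] is a source (target) vertex of the node [v] not consumed by an arrow
   inside [S]; [sub_src r S] collects these over [v] in [S]. *)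
Definition open_src S v x :=
  hsrc (plab r v) x /\ ~ (exists2 e, (e \in A0) && (e.1 \in S) & e.2 = v /\ brk e x).
Definition open_tgt S v x :=
  htgt (plab r v) x /\ ~ (exists2 e, (e \in A0) && (e.2 \in S) & e.1 = v /\ brk e x).

Definition open_src_uniq S :=
  forall v v' x, v \in S -> v' \in S -> open_src S v x -> open_src S v' x -> v = v'.
Definition open_tgt_uniq S :=
  forall v v' x, v \in S -> v' \in S -> open_tgt S v x -> open_tgt S v' x -> v = v'.

Definition sub_label S : hedge V := (sub_src r S, sub_tgt r S).

Lemma open_src_sub S S' v x : S \subset S' -> open_src S' v x -> open_src S v x.
Proof.
move=> /fintype.subsetP sS [h1 h2]; split => // -[e /andP[eA e1] h]; apply: h2.
by exists e => //; rewrite eA sS.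
Qed.

Lemma open_tgt_sub S S' v x : S \subset S' -> open_tgt S' v x -> open_tgt S v x.
Proof.
move=> /fintype.subsetP sS [h1 h2]; split => // -[e /andP[eA e1] h]; apply: h2.
by exists e => //; rewrite eA sS.
Qed.

End Blocks.

Section GlueTwo.
Variables (V : Type) (N : finType) (T : ptree V N) (u w : N) (K : V).
Hypotheses (uw : u != w) (uwT : (u, w) \in parrows T).
Hypothesis only_uw : forall e, e \in parrows T ->
  e.1 \in [set u; w] -> e.2 \in [set u; w] -> e = (u, w).
Hypothesis uwK : brkset T (u, w) = [set K]%classic.

Let u_in : u \in [set u; w]. Proof. by rewrite !inE eqxx. Qed.
Let w_in : w \in [set u; w]. Proof. by rewrite !inE eqxx orbT. Qed.

Lemma sub_src_pair :
  sub_src T [set u; w] = (hsrc (plab T u) `|` (hsrc (plab T w) `\ K))%classic.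
Proof.
apply/seteqP; split => x /=.
  case=> v /[!inE] /orP[]/eqP -> [vx noe]; first by left.
  right; split => // xK; apply: noe; exists (u, w); first by rewrite uwT u_in.
  by split => //; rewrite uwK xK.
case=> [ux|[wx xK]]; [exists u | exists w] => //; split => // -[e /andP[eA e1] [e2 ex]].
  by move: uw; rewrite -e2 (only_uw eA e1) ?e2 ?eqxx.
by apply: xK; move: ex; rewrite (only_uw eA e1) ?e2 // uwK.
Qed.

Lemma sub_tgt_pair :
  sub_tgt T [set u; w] = ((htgt (plab T u) `\ K) `|` htgt (plab T w))%classic.
Proof.
apply/seteqP; split => x /=.
  case=> v /[!inE] /orP[]/eqP -> [vx noe]; last by right.
  left; split => // xK; apply: noe; exists (u, w); first by rewrite uwT w_in.
  by split => //; rewrite uwK xK.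
case=> [[ux xK]|wx]; [exists u | exists w] => //; split => // -[e /andP[eA e2] [e1 ex]].
  by apply: xK; move: ex; rewrite (only_uw eA) ?e1 // uwK.
by move: uw; rewrite -e1 (only_uw eA) ?e1 ?eqxx.
Qed.

End GlueTwo.

Lemma iso_id (V : Type) (N : finType) (T : ptree V N) : is_iso id T T.
Proof.
split => //; first exact: finset.imset_id.
by apply/setP => z; apply/imsetP/idP => [[y yT ->]|zT]; [|exists z]; rewrite -?surjective_pairing.
Qed.

Lemma iso_comp (V : Type) (N1 N2 N3 : finType) (f : N1 -> N2) (g : N2 -> N3)
    (r1 : ptree V N1) (r2 : ptree V N2) (r3 : ptree V N3) :
  is_iso f r1 r2 -> is_iso g r2 r3 -> is_iso (g \o f) r1 r3.
Proof.
case=> fi fS fA flab [gi gS gA glab].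
have fin x : x \in pnodes r1 -> f x \in pnodes r2 by move=> xS; rewrite -fS imset_f.
split.
- by move=> x y xS yS /gi fxy; apply: fi => //; apply: fxy; apply: fin.
- by rewrite finset.imset_comp fS gS.
- by rewrite -gA -fA -finset.imset_comp.
- by move=> x xS /=; rewrite glab ?fin // flab.
Qed.

Lemma seq_ident_refl (V : Type) (N : finType) (T : ptree V N) s : seq_ident T s T s.
Proof.
elim: s T => [|e s IHs] T /=; first by exists id; apply: iso_id.
by split => //; exists id; split; [apply: iso_id | rewrite -surjective_pairing].
Qed.

Section Gluing.
Variables (V : Type) (E : set (hedge V)) (N : finType) (r : ptree V N).
Hypothesis hE : higraph E.
Hypothesis hr : is_path E r.
Implicit Types (P Q : {set N}).
Local Notation V0 := (pnodes r).
Local Notation A0 := (parrows r).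
Local Notation brk := (brkset r).
Local Notation open_src := (open_src r).
Local Notation open_tgt := (open_tgt r).
Local Notation sub_label := (sub_label r).

Lemma path_tree : is_tree V0 A0.
Proof. by case: hr => /directed_tree_is_tree. Qed.

Lemma path_arrow_in b : b \in A0 -> b.1 \in V0 /\ b.2 \in V0.
Proof. exact: (tree_arrow_in path_tree). Qed.

Lemma path_brk1 b : b \in A0 -> exists K, brk b = [set K]%classic.
Proof. by case: hr => _ _ h _ /h. Qed.

Lemma path_brk_sep e e' : e \in A0 -> e' \in A0 -> e != e' ->
  (e.1 = e'.1 \/ e.2 = e'.2) -> brk e <> brk e'.
Proof. by case: hr => _ _ _; apply. Qed.

(* By (2), the break vertex of [b] is consumed only by [b] itself. *)
Lemma open_tgt_brk b K P : b \in A0 -> brk b = [set K]%classic -> b.2 \notin P ->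
  open_tgt P b.1 K.
Proof.
move=> bA bK b2P; split; first by have [] : brk b K by rewrite bK.
case=> e /andP[eA e2P] [e1 eK]; have [K' eK'] := path_brk1 eA.
apply: (path_brk_sep eA bA _ (or_introl e1)).
  by apply: contraNneq b2P => <-.
by rewrite eK' bK; move: eK; rewrite eK' => ->.
Qed.

Lemma open_src_brk b K Q : b \in A0 -> brk b = [set K]%classic -> b.1 \notin Q ->
  open_src Q b.2 K.
Proof.
move=> bA bK b1Q; split; first by have [] : brk b K by rewrite bK.
case=> e /andP[eA e1Q] [e2 eK]; have [K' eK'] := path_brk1 eA.
apply: (path_brk_sep eA bA _ (or_intror e2)).
  by apply: contraNneq b1Q => <-.
by rewrite eK' bK; move: eK; rewrite eK' => ->.
Qed.

Lemma higraph_compose e1 e2 K : E e1 -> E e2 -> htgt e1 K -> hsrc e2 K ->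
  [/\ (htgt e1 `&` hsrc e2 = [set K])%classic,
      [disjoint hsrc e1 & (hsrc e2 `\ K)]%classic,
      [disjoint (htgt e1 `\ K) & htgt e2]%classic &
      E (hsrc e1 `|` (hsrc e2 `\ K), (htgt e1 `\ K) `|` htgt e2)%classic].
Proof.
move=> E1 E2 t1K s2K; case: hE => trans _.
have [|K' [e12 [d1 [d2 E12]]]] := trans _ _ E1 E2; first by exists K.
have -> : K = K' by have : (htgt e1 `&` hsrc e2)%classic K by []; rewrite e12.
by split.
Qed.

Section Union.
Variables (P Q : {set N}) (a : N * N) (K : V).
Hypotheses (aA : a \in A0) (aP : a.1 \in P) (aQ : a.2 \in Q) (aK : brk a = [set K]%classic).
Hypothesis disjPQ : forall x, x \in P -> x \in Q -> False.
Hypothesis noQP : forall b, b \in A0 -> b.1 \in Q -> b.2 \in P -> False.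
Hypothesis onlyPQ : forall b, b \in A0 -> b.1 \in P -> b.2 \in Q -> b = a.
Hypotheses (EP : E (sub_label P)) (EQ : E (sub_label Q)).
Hypotheses (srcP : open_src_uniq r P) (tgtP : open_tgt_uniq r P).
Hypotheses (srcQ : open_src_uniq r Q) (tgtQ : open_tgt_uniq r Q).

Lemma open_tgt_a1 : open_tgt P a.1 K.
Proof. by apply: open_tgt_brk => //; apply/negP => /disjPQ; apply. Qed.

Lemma open_src_a2 : open_src Q a.2 K.
Proof. by apply: open_src_brk => //; apply/negP => /disjPQ; apply. Qed.

Lemma sub_label_compose :
  [/\ (htgt (sub_label P) `&` hsrc (sub_label Q) = [set K])%classic,
      [disjoint hsrc (sub_label P) & (hsrc (sub_label Q) `\ K)]%classic,
      [disjoint (htgt (sub_label P) `\ K) & htgt (sub_label Q)]%classic &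
      E (hsrc (sub_label P) `|` (hsrc (sub_label Q) `\ K),
         (htgt (sub_label P) `\ K) `|` htgt (sub_label Q))%classic].
Proof.
apply: higraph_compose => //; [exists a.1 | exists a.2] => //;
  [exact: open_tgt_a1 | exact: open_src_a2].
Qed.

Let PU : P \subset P :|: Q := finset.subsetUl P Q.
Let QU : Q \subset P :|: Q := finset.subsetUr P Q.

Lemma open_src_union_K v : v \in Q -> ~ open_src (P :|: Q) v K.
Proof.
move=> vQ vK; have va : v = a.2 := srcQ vQ aQ (open_src_sub QU vK) open_src_a2.
case: vK => _; apply; exists a; last by split => //; rewrite aK.
by rewrite aA inE aP.
Qed.

Lemma open_tgt_union_K v : v \in P -> ~ open_tgt (P :|: Q) v K.
Proof.
move=> vP vK; have va : v = a.1 := tgtP vP aP (open_tgt_sub PU vK) open_tgt_a1.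
case: vK => _; apply; exists a; last by split => //; rewrite aK.
by rewrite aA inE aQ orbT.
Qed.

Lemma sub_src_union :
  sub_src r (P :|: Q) = (sub_src r P `|` (sub_src r Q `\ K))%classic.
Proof.
apply/seteqP; split => x /=.
  case=> v /[!inE] /orP[vP|vQ] vx; first by left; exists v => //; apply: open_src_sub PU vx.
  right; split; first by exists v => //; apply: open_src_sub QU vx.
  by move=> xK; rewrite xK in vx; apply: open_src_union_K vQ vx.
case=> [[v vP [vx noe]]|[[v vQ [vx noe]] xK]].
  exists v; first by rewrite inE vP.
  split => // -[e /andP[eA]] /[!inE] /orP[e1|e1] [e2 ex].
    by apply: noe; exists e; rewrite ?eA ?e1.
  by apply: (noQP eA e1); rewrite e2.
exists v; first by rewrite inE vQ orbT.
split => // -[e /andP[eA]] /[!inE] /orP[e1|e1] [e2 ex];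
  last by apply: noe; exists e; rewrite ?eA ?e1.
by apply: xK; move: ex; rewrite (onlyPQ eA e1) ?e2 // aK.
Qed.

Lemma sub_tgt_union :
  sub_tgt r (P :|: Q) = ((sub_tgt r P `\ K) `|` sub_tgt r Q)%classic.
Proof.
apply/seteqP; split => x /=.
  case=> v /[!inE] /orP[vP|vQ] vx; last by right; exists v => //; apply: open_tgt_sub QU vx.
  left; split; first by exists v => //; apply: open_tgt_sub PU vx.
  by move=> xK; rewrite xK in vx; apply: open_tgt_union_K vP vx.
case=> [[[v vP [vx noe]] xK]|[v vQ [vx noe]]].
  exists v; first by rewrite inE vP.
  split => // -[e /andP[eA]] /[!inE] /orP[e2|e2] [e1 ex].
    by apply: noe; exists e; rewrite ?eA ?e2.
  by apply: xK; move: ex; rewrite (onlyPQ eA) ?e1 // aK.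
exists v; first by rewrite inE vQ orbT.
split => // -[e /andP[eA]] /[!inE] /orP[e2|e2] [e1 ex];
  last by apply: noe; exists e; rewrite ?eA ?e2.
by apply: (noQP eA) => //; rewrite e1.
Qed.

Lemma sub_label_union_E : E (sub_label (P :|: Q)).
Proof. by rewrite /sub_label sub_src_union sub_tgt_union; case: sub_label_compose. Qed.

Lemma open_src_uniq_union : open_src_uniq r (P :|: Q).
Proof.
have cross v v' x : v \in P -> v' \in Q ->
    open_src (P :|: Q) v x -> open_src (P :|: Q) v' x -> False.
  move=> vP v'Q vx v'x; have [xK|xK] := pselect (x = K).
    by rewrite xK in v'x; apply: open_src_union_K v'Q v'x.
  case: sub_label_compose => _ /disj_setPS dj _ _; apply: (dj x); split.
    by exists v => //; apply: open_src_sub PU vx.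
  by split=> //; exists v' => //; apply: open_src_sub QU v'x.
move=> v v' x /[!inE] /orP[vP|vQ] /orP[v'P|v'Q] vx v'x.
- exact: srcP vP v'P (open_src_sub PU vx) (open_src_sub PU v'x).
- by case: (cross _ _ _ vP v'Q vx v'x).
- by case: (cross _ _ _ v'P vQ v'x vx).
- exact: srcQ vQ v'Q (open_src_sub QU vx) (open_src_sub QU v'x).
Qed.

Lemma open_tgt_uniq_union : open_tgt_uniq r (P :|: Q).
Proof.
have cross v v' x : v \in P -> v' \in Q ->
    open_tgt (P :|: Q) v x -> open_tgt (P :|: Q) v' x -> False.
  move=> vP v'Q vx v'x; have [xK|xK] := pselect (x = K).
    by rewrite xK in vx; apply: open_tgt_union_K vP vx.
  case: sub_label_compose => _ _ /disj_setPS dj _; apply: (dj x); split.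
    by split=> //; exists v => //; apply: open_tgt_sub PU vx.
  by exists v' => //; apply: open_tgt_sub QU v'x.
move=> v v' x /[!inE] /orP[vP|vQ] /orP[v'P|v'Q] vx v'x.
- exact: tgtP vP v'P (open_tgt_sub PU vx) (open_tgt_sub PU v'x).
- by case: (cross _ _ _ vP v'Q vx v'x).
- by case: (cross _ _ _ v'P vQ v'x vx).
- exact: tgtQ vQ v'Q (open_tgt_sub QU vx) (open_tgt_sub QU v'x).
Qed.

Lemma glue_blocks :
  [/\ (htgt (sub_label P) `&` hsrc (sub_label Q) = [set K])%classic,
      sub_src r (P :|: Q) = (sub_src r P `|` (sub_src r Q `\ K))%classic,
      sub_tgt r (P :|: Q) = ((sub_tgt r P `\ K) `|` sub_tgt r Q)%classic,
      E (sub_label (P :|: Q)) &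
      open_src_uniq r (P :|: Q) /\ open_tgt_uniq r (P :|: Q)].
Proof.
split; [by case: sub_label_compose | exact: sub_src_union | exact: sub_tgt_union |
        exact: sub_label_union_E | split].
- exact: open_src_uniq_union.
- exact: open_tgt_uniq_union.
Qed.

End Union.

(* A stage of a gluing sequence is encoded on the nodes of [r]: [X] is the set of
   arrows glued so far and [rho] maps every node to the representative of its
   block, i.e. of its connected component for the arrows in [X]. *)
Definition block (rho : N -> N) y := [set x in V0 | rho x == y].
Definition block_label rho y := sub_label (block rho y).

Lemma in_block rho y x : (x \in block rho y) = (x \in V0) && (rho x == y).
Proof. by rewrite inE. Qed.

Record glue_state (rho : N -> N) (X : {set N * N}) : Prop := GlueState {
  glued_sub : X \subset A0;
  repr_in : {in V0, forall x, rho x \in V0};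
  repr_connect : {in V0, forall x, connect (arrow_adj X) x (rho x)};
  repr_glued : {in X, forall b, rho b.1 = rho b.2};
  repr_idem : {in V0, forall x, rho (rho x) = rho x};
  block_wf : {in V0, forall y, rho y = y ->
    [/\ E (block_label rho y), open_src_uniq r (block rho y) &
         open_tgt_uniq r (block rho y)]}
}.

Record represents (T : ptree V N) rho X : Prop := Represents {
  nodes_repr : pnodes T = [set x in V0 | rho x == x];
  arrows_repr : parrows T = [set (rho a.1, rho a.2) | a in A0 :\: X];
  labels_repr : {in pnodes T, forall y, plab T y = block_label rho y}
}.

Definition merge (rho : N -> N) (b : N * N) :=
  fun x => if rho x == rho b.2 then rho b.1 else rho x.

Lemma path_bridge_sub a (Y : {set N * N}) :
  a \in A0 -> Y \subset A0 :\ a -> ~ connect (arrow_adj Y) a.1 a.2.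
Proof. by move=> aA sY /(connect_arrow_adjS sY); apply: (tree_bridge path_tree aA). Qed.

Section State.
Variables (rho : N -> N) (X : {set N * N}).
Hypothesis st : glue_state rho X.

Lemma connect_repr x y : connect (arrow_adj X) x y -> rho x = rho y.
Proof.
case/connectP => p + ->; elim: p x => [|z p IHp] x //= /andP[xz pz].
by rewrite -IHp //; case/orP: xz => /(repr_glued st) /= ->.
Qed.

Lemma repr_connect_eq x y :
  x \in V0 -> y \in V0 -> rho x = rho y -> connect (arrow_adj X) x y.
Proof.
move=> xV yV xy; apply: connect_trans (repr_connect st xV) _.
by rewrite xy connect_arrow_adjC; apply: repr_connect.
Qed.

Lemma glued_subD a : a \in A0 -> a \notin X -> X \subset A0 :\ a.
Proof.
move=> aA aX; apply/fintype.subsetP => b bX.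
rewrite !inE (fintype.subsetP (glued_sub st) _ bX) andbT.
by apply: contraNneq aX => <-.
Qed.

Lemma glued_subU a b :
  a \in A0 -> a \notin X -> b \in A0 -> b != a -> b |: X \subset A0 :\ a.
Proof.
move=> aA aX bA ba; apply/fintype.subsetP => c /[!inE] /orP[/eqP ->|cX].
  by rewrite ba bA.
by move/fintype.subsetP: (glued_subD aA aX) => /(_ c cX); rewrite !inE.
Qed.

(* An unglued arrow is a bridge: it joins two distinct blocks, and no other unglued
   arrow joins the same two blocks. *)
Lemma repr_arrow_neq b : b \in A0 -> b \notin X -> rho b.1 != rho b.2.
Proof.
move=> bA bX; apply/eqP => e; have [b1 b2] := path_arrow_in bA.
exact: (path_bridge_sub bA (glued_subD bA bX) (repr_connect_eq b1 b2 e)).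
Qed.

Lemma repr_arrow_inj a b : a \in A0 -> a \notin X -> b \in A0 -> b \notin X ->
  rho a.1 = rho b.1 -> rho a.2 = rho b.2 -> a = b.
Proof.
move=> aA aX bA bX e1 e2; apply/eqP/negP => /negP ab.
have [a1 a2] := path_arrow_in aA; have [b1 b2] := path_arrow_in bA.
have sX := finset.subsetU1 b X.
apply: (path_bridge_sub aA (glued_subU aA aX bA _)); first by rewrite eq_sym.
apply: connect_trans (connect_arrow_adjS sX (repr_connect_eq a1 b1 e1)) _.
apply: connect_trans (connect1 (arrow_adj_arrow (finset.setU11 b X))) _.
exact: connect_arrow_adjS sX (repr_connect_eq b2 a2 (esym e2)).
Qed.

Lemma repr_arrow_no_opp a b : a \in A0 -> a \notin X -> b \in A0 -> b \notin X ->
  rho a.1 = rho b.2 -> rho a.2 = rho b.1 -> False.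
Proof.
move=> aA aX bA bX e1 e2; have [ba|ab] := eqVneq b a.
  by move: (repr_arrow_neq aA aX); rewrite e1 ba eqxx.
have [a1 a2] := path_arrow_in aA; have [b1 b2] := path_arrow_in bA.
have sX := finset.subsetU1 b X.
apply: (path_bridge_sub aA (glued_subU aA aX bA ab)).
apply: connect_trans (connect_arrow_adjS sX (repr_connect_eq a1 b2 e1)) _.
apply: connect_trans (connect1 (arrow_adj_arrowC (finset.setU11 b X))) _.
exact: connect_arrow_adjS sX (repr_connect_eq b1 a2 (esym e2)).
Qed.

Section Merge.
Variable a : N * N.
Hypotheses (aA : a \in A0) (aX : a \notin X).
Local Notation u := (rho a.1).
Local Notation w := (rho a.2).
Local Notation rho' := (merge rho a).

Let a1V : a.1 \in V0. Proof. by have [] := path_arrow_in aA. Qed.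
Let a2V : a.2 \in V0. Proof. by have [] := path_arrow_in aA. Qed.
Let uu : rho u = u. Proof. exact: (repr_idem st a1V). Qed.
Let ww : rho w = w. Proof. exact: (repr_idem st a2V). Qed.
Let uw : u != w. Proof. exact: (repr_arrow_neq aA aX). Qed.

Lemma block_merge_u : block rho' u = block rho u :|: block rho w.
Proof.
apply/setP => x; rewrite !inE /merge.
by case: (x \in V0) => //=; have [->|] := eqVneq (rho x) w; rewrite ?eqxx ?orbT ?orbF.
Qed.

Lemma block_merge_other y : y != u -> y != w -> block rho' y = block rho y.
Proof.
move=> yu yw; apply/setP => x; rewrite !inE /merge.
by have [->|] := eqVneq (rho x) w; rewrite // ![_ == y]eq_sym (negbTE yu) (negbTE yw).
Qed.

Lemma glue_blocks_uw K : brk a = [set K]%classic ->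
  [/\ (htgt (block_label rho u) `&` hsrc (block_label rho w) = [set K])%classic,
      sub_src r (block rho u :|: block rho w) =
        (sub_src r (block rho u) `|` (sub_src r (block rho w) `\ K))%classic,
      sub_tgt r (block rho u :|: block rho w) =
        ((sub_tgt r (block rho u) `\ K) `|` sub_tgt r (block rho w))%classic,
      E (sub_label (block rho u :|: block rho w)) &
      open_src_uniq r (block rho u :|: block rho w) /\
      open_tgt_uniq r (block rho u :|: block rho w)].
Proof.
move=> aK; have unglued b : b \in A0 -> rho b.1 != rho b.2 -> b \notin X.
  by move=> bA; apply: contra => /(repr_glued st) ->.
have [Eu su tu] := block_wf st (repr_in st a1V) uu.
have [Ew sw tw] := block_wf st (repr_in st a2V) ww.
apply: glue_blocks aK _ _ _ Eu Ew su tu sw tw; rewrite ?in_block ?a1V ?a2V ?eqxx //.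
- move=> x; rewrite !in_block => /andP[_ /eqP ->] /andP[_ /eqP xw].
  by move: uw; rewrite xw eqxx.
- move=> b bA; rewrite !in_block => /andP[_ /eqP b1] /andP[_ /eqP b2].
  by apply: (repr_arrow_no_opp aA aX bA); rewrite ?b1 ?b2 // unglued // b1 b2 eq_sym.
- move=> b bA; rewrite !in_block => /andP[_ /eqP b1] /andP[_ /eqP b2].
  by apply/esym/(repr_arrow_inj aA aX bA); rewrite ?b1 ?b2 // unglued // b1 b2.
Qed.

Lemma glue_state_merge : glue_state rho' (a |: X).
Proof.
have [K aK] := path_brk1 aA; have [_ _ _ EU [sU tU]] := glue_blocks_uw aK.
have sX := finset.subsetU1 a X.
split.
- by rewrite finset.subUset finset.sub1set aA (glued_sub st).
- by move=> x xV; rewrite /merge; case: ifP => _; apply: (repr_in st).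
- move=> x xV; apply: connect_trans (connect_arrow_adjS sX (repr_connect st xV)) _.
  rewrite /merge; case: ifP => [/eqP ->|_]; last exact: connect0.
  apply: connect_trans (connect_arrow_adjS sX (repr_connect_eq (repr_in st a2V) a2V ww)) _.
  apply: connect_trans (connect1 (arrow_adj_arrowC (finset.setU11 a X))) _.
  exact: connect_arrow_adjS sX (repr_connect st a1V).
- move=> b /[!inE] /orP[/eqP ->|bX]; first by rewrite /merge (negbTE uw) eqxx.
  by rewrite /merge (repr_glued st bX).
- move=> x xV; rewrite /merge; have [xw|xw] := eqVneq (rho x) w.
    by rewrite uu (negbTE uw).
  by rewrite (repr_idem st xV) (negbTE xw).
- move=> y yV; rewrite {1}/merge; have [yu|yu] := eqVneq y u.
    by move=> _; rewrite yu /block_label block_merge_u.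
  have [yw|yw] := eqVneq (rho y) w; first by move=> uy; move: yu; rewrite -uy eqxx.
  move=> yy; have yw' : y != w by rewrite -yy.
  by rewrite /block_label block_merge_other //; apply: (block_wf st).
Qed.

Section Represent.
Variable T : ptree V N.
Hypothesis rT : represents T rho X.

Lemma represents_only_uw e : e \in parrows T ->
  e.1 \in [set u; w] -> e.2 \in [set u; w] -> e = (u, w).
Proof.
rewrite (arrows_repr rT) => /imsetP[b /[!inE] /andP[bX bA] ->] /=.
have buw := repr_arrow_neq bA bX.
move=> /orP[]/eqP b1 /orP[]/eqP b2.
- by move: buw; rewrite b1 b2 eqxx.
- by rewrite (repr_arrow_inj aA aX bA bX (esym b1) (esym b2)).
- by case: (repr_arrow_no_opp aA aX bA bX (esym b2) (esym b1)).
- by move: buw; rewrite b1 b2 eqxx.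
Qed.

Let uT : u \in pnodes T. Proof. by rewrite (nodes_repr rT) inE (repr_in st a1V) uu eqxx. Qed.
Let wT : w \in pnodes T. Proof. by rewrite (nodes_repr rT) inE (repr_in st a2V) ww eqxx. Qed.

Lemma nodes_glue_merge : pnodes (glue T (u, w)) = [set x in V0 | rho' x == x].
Proof.
rewrite /glue /= (nodes_repr rT); apply/setP => x; rewrite !inE /merge.
have [->|xw] := eqVneq x w; first by rewrite ww eqxx (negbTE uw) andbF.
case: (x \in V0) => //=; have [xw'|//] := eqVneq (rho x) w.
rewrite xw' eq_sym (negbTE xw); apply/esym/negbTE; apply: contra_neq uw => ux.
by rewrite -xw' -ux uu.
Qed.

Lemma arrows_glue_merge :
  parrows (glue T (u, w)) = [set (rho' b.1, rho' b.2) | b in A0 :\: (a |: X)].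
Proof.
rewrite /glue /=; apply/setP => z; apply/imsetP/imsetP.
  case=> c /[!inE] /andP[cuw]; rewrite (arrows_repr rT).
  move=> /imsetP[b /[!inE] /andP[bX bA] cb ->].
  exists b; last by rewrite cb.
  rewrite !inE negb_or bA (negbTE bX) !andbT.
  by apply: contraNneq cuw => ba; rewrite cb ba.
case=> b /[!inE] /andP[/norP[ba bX] bA] ->; exists (rho b.1, rho b.2) => //.
rewrite !inE (arrows_repr rT) andbC; apply/andP; split.
  by apply/imsetP; exists b; rewrite // !inE bX bA.
by apply: contra ba => /eqP[b1 b2]; rewrite (repr_arrow_inj aA aX bA bX) ?b1 ?b2.
Qed.

Lemma labels_glue_merge :
  {in pnodes (glue T (u, w)), forall y, plab (glue T (u, w)) y = block_label rho' y}.
Proof.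
move=> y /[!inE] /andP[yw yT] /=; have [->|yu] := eqVneq y u; last first.
  by rewrite (labels_repr rT yT) /block_label block_merge_other.
have [K aK] := path_brk1 aA; have [uwK src tgt _ _] := glue_blocks_uw aK.
have uwK' : brkset T (u, w) = [set K]%classic.
  by rewrite /brkset /= !(labels_repr rT).
have uwT : (u, w) \in parrows T.
  by rewrite (arrows_repr rT); apply/imsetP; exists a; rewrite // !inE aX aA.
rewrite /block_label block_merge_u (sub_src_pair uw uwT represents_only_uw uwK').
by rewrite (sub_tgt_pair uw uwT represents_only_uw uwK') !(labels_repr rT) // -src -tgt.
Qed.

Lemma represents_merge : represents (glue T (u, w)) rho' (a |: X).
Proof.
by split; [exact: nodes_glue_merge | exact: arrows_glue_merge | exact: labels_glue_merge].
Qed.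

End Represent.
End Merge.
End State.

Lemma block_id y : y \in V0 -> block id y = [set y].
Proof.
by move=> yV; apply/setP => x; rewrite !inE; have [->|] := eqVneq x y; rewrite ?yV ?andbF.
Qed.

Lemma block_label_id y : y \in V0 -> block_label id y = plab r y.
Proof.
move=> yV; rewrite /block_label block_id // /sub_label [plab r y]surjective_pairing.
have noloop e : e \in A0 -> e.1 \in [set y] -> e.2 = y -> False.
  move=> eA; rewrite inE => /eqP e1 e2.
  by move: (tree_arrow_neq path_tree eA); rewrite e1 e2 eqxx.
congr pair; apply/seteqP; split => x /=.
- by case=> v /[!inE] /eqP -> [].
- move=> yx; exists y; rewrite ?inE //; split => // -[e /andP[eA e1] [e2 _]].
  exact: noloop eA e1 e2.
- by case=> v /[!inE] /eqP -> [].
- move=> yx; exists y; rewrite ?inE //; split => // -[e /andP[eA e2] [e1 _]].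
  by apply: (noloop e eA); [rewrite inE e1 | apply/eqP; move: e2; rewrite inE].
Qed.

Lemma glue_state_id : glue_state id finset.set0.
Proof.
split => //.
- exact: finset.sub0set.
- by move=> b; rewrite inE.
- move=> y yV _; rewrite block_label_id // block_id //.
  split; first by case: hr => _ + _ _; apply.
  + by move=> v v' x /[!inE] /eqP -> /eqP ->.
  + by move=> v v' x /[!inE] /eqP -> /eqP ->.
Qed.

Lemma represents_id : represents r id finset.set0.
Proof.
split.
- by apply/setP => x; rewrite !inE eqxx andbT.
- apply/setP => z; rewrite finset.setD0; apply/idP/imsetP => [zA|[b bA ->]].
    by exists z; rewrite -?surjective_pairing.
  by rewrite -surjective_pairing.
- by move=> y yV; rewrite block_label_id.
Qed.

Fixpoint glue_arrows (rho : N -> N) (s : seq (N * N)) : seq (N * N) :=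
  if s is b :: s' then (rho b.1, rho b.2) :: glue_arrows (merge rho b) s' else [::].

Fixpoint merge_all (rho : N -> N) (s : seq (N * N)) : N -> N :=
  if s is b :: s' then merge_all (merge rho b) s' else rho.

Definition fresh_arrows (X : {set N * N}) (s : seq (N * N)) :=
  uniq s && all (fun b => (b \in A0) && (b \notin X)) s.

Lemma size_glue_arrows rho s : size (glue_arrows rho s) = size s.
Proof. by elim: s rho => //= b s IHs rho; rewrite IHs. Qed.

Lemma fresh_arrows_cons X b s : fresh_arrows X (b :: s) ->
  [/\ b \in A0, b \notin X & fresh_arrows (b |: X) s].
Proof.
rewrite /fresh_arrows /= => /andP[/andP[bs us] /andP[/andP[bA bX] fs]]; split => //.
rewrite us; apply/allP => c cs; move/allP: fs => /(_ c cs) /andP[-> cX].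
by rewrite !inE negb_or cX andbT; apply: contraNneq bs => <-.
Qed.

Lemma glue_arrows_correct s rho X T :
  glue_state rho X -> represents T rho X -> fresh_arrows X s ->
  [/\ is_glue_seq T (glue_arrows rho s),
      glue_state (merge_all rho s) (X :|: [set b in s]) &
      represents (glue_end T (glue_arrows rho s)) (merge_all rho s) (X :|: [set b in s])].
Proof.
elim: s rho X T => [|b s IHs] rho X T st rT fs.
  by rewrite (_ : X :|: _ = X) //; apply/setP => x; rewrite !inE orbF.
have [bA bX fs'] := fresh_arrows_cons fs.
have [gs st' rT'] := IHs _ _ _ (glue_state_merge st bA bX) (represents_merge st bA bX rT) fs'.
have -> : X :|: [set x in b :: s] = (b |: X) :|: [set x in s].
  by apply/setP => x; rewrite !inE orbA (orbC (x == b)).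
split => //=; split => //.
by rewrite (arrows_repr rT); apply/imsetP; exists b; rewrite // !inE bX bA.
Qed.

Lemma glue_seq_arrows s' rho X T :
  glue_state rho X -> represents T rho X -> is_glue_seq T s' ->
  exists2 s, fresh_arrows X s & glue_arrows rho s = s'.
Proof.
elim: s' rho X T => [|e s' IHs] rho X T st rT /=; first by exists [::].
case; rewrite (arrows_repr rT) => /imsetP[b /[!inE] /andP[bX bA] ->] gs.
have [s fs <-] := IHs _ _ _ (glue_state_merge st bA bX) (represents_merge st bA bX rT) gs.
exists (b :: s) => //; move: fs; rewrite /fresh_arrows /= => /andP[us fs].
rewrite us bA bX /= andbT; apply/andP; split.
  by apply/negP => /(allP fs); rewrite !inE eqxx andbF.
by apply/allP => c /(allP fs) /andP[-> ]; rewrite !inE negb_or => /andP[].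
Qed.

Lemma glue_arrows_inj s t rho X : glue_state rho X ->
  fresh_arrows X s -> fresh_arrows X t -> glue_arrows rho s = glue_arrows rho t -> s = t.
Proof.
elim: s t rho X => [|b s IHs] [|c t] rho X st //= fs ft [b1 b2 eq].
have [bA bX fs'] := fresh_arrows_cons fs; have [cA cX ft'] := fresh_arrows_cons ft.
have bc := repr_arrow_inj st bA bX cA cX b1 b2; subst c; congr cons.
exact: IHs (glue_state_merge st bA bX) fs' ft' eq.
Qed.

Section Represented.
Variables (rho : N -> N) (X : {set N * N}) (T : ptree V N).
Hypotheses (st : glue_state rho X) (rT : represents T rho X).

Lemma represented_arrow c : c \in parrows T ->
  exists2 b, (b \in A0) && (b \notin X) & c = (rho b.1, rho b.2).
Proof.
by rewrite (arrows_repr rT) => /imsetP[b /[!inE] /andP[bX bA] ->]; exists b; rewrite ?bA.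
Qed.

Lemma repr_node x : x \in V0 -> rho x \in pnodes T.
Proof. by move=> xV; rewrite (nodes_repr rT) inE (repr_in st xV) (repr_idem st xV) eqxx. Qed.

Lemma node_repr x : x \in pnodes T -> x \in V0 /\ rho x = x.
Proof. by rewrite (nodes_repr rT) inE => /andP[-> /eqP]. Qed.

Lemma represented_adj x y :
  arrow_adj A0 x y -> connect (arrow_adj (parrows T)) (rho x) (rho y).
Proof.
have arrow b : b \in A0 -> connect (arrow_adj (parrows T)) (rho b.1) (rho b.2).
  move=> bA; have [bX|bX] := boolP (b \in X); first by rewrite (repr_glued st bX).
  apply/connect1/orP; left; rewrite (arrows_repr rT).
  by apply/imsetP; exists b; rewrite // !inE bX.
by case/orP=> [/arrow //|/arrow]; rewrite connect_arrow_adjC.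
Qed.

Lemma represented_arrow_connect b : b \in A0 -> b \notin X ->
  connect (arrow_adj (b |: X)) (rho b.1) (rho b.2).
Proof.
move=> bA bX; have [b1 b2] := path_arrow_in bA; have sX := finset.subsetU1 b X.
apply: connect_trans (connect_arrow_adjS sX _) _.
  by rewrite connect_arrow_adjC; apply: (repr_connect st b1).
apply: connect_trans (connect1 (arrow_adj_arrow (finset.setU11 b X))) _.
exact: connect_arrow_adjS sX (repr_connect st b2).
Qed.

(* Contracting the arrows of [X] keeps every other arrow a bridge: a detour in [T]
   lifts to a detour in [r] through the blocks. *)
Lemma represented_tree : is_tree (pnodes T) (parrows T).
Proof.
split.
- move=> c /represented_arrow[b /andP[bA _] ->] /=.
  by have [b1 b2] := path_arrow_in bA; rewrite !repr_node.
- move=> x y /node_repr[xV <-] /node_repr[yV <-].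
  case: hr => -[_ [_ _ _ conn _]] _ _ _.
  case/connectP: (conn x y xV yV) => p + ->.
  elim: p x {xV} => [|z p IHp] x //= /andP[xz pz].
  exact: connect_trans (represented_adj xz) (IHp _ pz).
- move=> c cT; apply/negP => cc; have [a /andP[aA aX] ca] := represented_arrow cT.
  have lift u v : arrow_adj (parrows T :\ c) u v -> connect (arrow_adj (A0 :\ a)) u v.
    suff arrow d : d \in parrows T -> d != c -> connect (arrow_adj (A0 :\ a)) d.1 d.2.
      by case/orP=> /[!inE] /andP[dc dT]; [|rewrite connect_arrow_adjC];
        apply: (arrow _ dT dc).
    move=> dT dc; have [b /andP[bA bX] db] := represented_arrow dT; rewrite db.
    have ba : b != a by apply: contraNneq dc => eba; rewrite db ca eba.
    exact: connect_arrow_adjS (glued_subU st aA aX bA ba) (represented_arrow_connect bA bX).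
  have [a1 a2] := path_arrow_in aA; have sX := glued_subD st aA aX.
  apply: (path_bridge_sub aA (fintype.subxx _)).
  apply: connect_trans (connect_arrow_adjS sX (repr_connect st a1)) _.
  have := connect_sub lift cc; rewrite ca /= => cc'.
  apply: connect_trans cc' _; rewrite connect_arrow_adjC.
  exact: connect_arrow_adjS sX (repr_connect st a2).
Qed.

Lemma brk_represented b : b \in A0 -> b \notin X -> brkset T (rho b.1, rho b.2) = brk b.
Proof.
move=> bA bX; have [K bK] := path_brk1 bA; have [b1 b2] := path_arrow_in bA.
have [uwK _ _ _ _] := glue_blocks_uw st bA bX bK.
by rewrite bK /brkset /= !(labels_repr rT) ?repr_node.
Qed.

(* Inside a block, the node consuming a given break vertex is unique. *)
Lemma same_brk_src b b' K : b \in A0 -> b \notin X -> b' \in A0 -> b' \notin X ->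
  brk b = [set K]%classic -> brk b' = [set K]%classic -> rho b.1 = rho b'.1 -> b.1 = b'.1.
Proof.
move=> bA bX b'A b'X bK b'K e1.
have [b1 b2] := path_arrow_in bA; have [b'1 b'2] := path_arrow_in b'A.
have [_ _ tgt] := block_wf st (repr_in st b1) (repr_idem st b1).
have out c : c \in A0 -> c \notin X -> rho c.1 = rho b.1 -> c.2 \notin block rho (rho b.1).
  by move=> cA cX <-; rewrite in_block negb_and eq_sym (repr_arrow_neq st cA cX) orbT.
apply: (tgt _ _ K).
- by rewrite in_block b1 eqxx.
- by rewrite in_block b'1 e1 eqxx.
- exact: open_tgt_brk bA bK (out _ bA bX erefl).
- exact: open_tgt_brk b'A b'K (out _ b'A b'X (esym e1)).
Qed.

Lemma same_brk_tgt b b' K : b \in A0 -> b \notin X -> b' \in A0 -> b' \notin X ->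
  brk b = [set K]%classic -> brk b' = [set K]%classic -> rho b.2 = rho b'.2 -> b.2 = b'.2.
Proof.
move=> bA bX b'A b'X bK b'K e2.
have [b1 b2] := path_arrow_in bA; have [b'1 b'2] := path_arrow_in b'A.
have [_ src _] := block_wf st (repr_in st b2) (repr_idem st b2).
have out c : c \in A0 -> c \notin X -> rho c.2 = rho b.2 -> c.1 \notin block rho (rho b.2).
  by move=> cA cX <-; rewrite in_block negb_and (repr_arrow_neq st cA cX) orbT.
apply: (src _ _ K).
- by rewrite in_block b2 eqxx.
- by rewrite in_block b'2 e2 eqxx.
- exact: open_src_brk bA bK (out _ bA bX erefl).
- exact: open_src_brk b'A b'K (out _ b'A b'X (esym e2)).
Qed.

Lemma represented_separated : label_separated (plab T) (parrows T).
Proof.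
move=> e e' /represented_arrow[b /andP[bA bX] ->] /represented_arrow[b' /andP[b'A b'X] ->].
move=> ee' share /= [l1 l2]; have bb' : b != b' by apply: contraNneq ee' => ->.
have bb : brk b = brk b'.
  by rewrite -brk_represented // -[RHS]brk_represented // /brkset /= l1 l2.
have [K bK] := path_brk1 bA; have b'K : brk b' = [set K]%classic by rewrite -bb.
apply: (path_brk_sep bA b'A bb' _ bb); case: share => /= [e1|e2].
  by left; apply: (same_brk_src bA bX b'A b'X bK b'K e1).
by right; apply: (same_brk_tgt bA bX b'A b'X bK b'K e2).
Qed.

Lemma represented_auto_id f : is_iso f T T -> {in pnodes T, forall x, f x = x}.
Proof.
case=> fi fT fA flab.
exact: (tree_auto_rigid represented_tree (And3 fi fT fA) flab represented_separated).
Qed.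

End Represented.

Lemma glue_seq_ident_eq s rho X T t : glue_state rho X -> represents T rho X ->
  is_glue_seq T s -> seq_ident T s T t -> s = t.
Proof.
elim: s rho X T t => [|e s IHs] rho X T [|e' t] st rT //= [eT gs] [[f [fiso fe]] sid].
have [b /andP[bA bX] eb] := represented_arrow rT eT.
have [e1T e2T] := tree_arrow_in (represented_tree st rT) eT.
have fid := represented_auto_id st rT fiso.
have ee' : e' = e by rewrite -fe !fid // -surjective_pairing.
rewrite ee' eb in sid *; rewrite eb in gs; congr cons.
exact: IHs _ _ _ _ (glue_state_merge st bA bX) (represents_merge st bA bX rT) gs sid.
Qed.

(* The blocks, hence the represented path up to isomorphism, depend only on the set
   of glued arrows: they are the components of [X]. *)
Lemma represents_iso rho rho' X (T T' : ptree V N) :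
  glue_state rho X -> glue_state rho' X -> represents T rho X -> represents T' rho' X ->
  is_iso rho' T T'.
Proof.
move=> st st' rT rT'.
have same_block x y : x \in V0 -> y \in V0 -> (rho x == rho y) = (rho' x == rho' y).
  move=> xV yV; apply/eqP/eqP => xy.
    exact: (connect_repr st' (repr_connect_eq st xV yV xy)).
  exact: (connect_repr st (repr_connect_eq st' xV yV xy)).
have rr x : x \in V0 -> rho' (rho x) = rho' x.
  by move=> xV; apply: (connect_repr st'); rewrite connect_arrow_adjC (repr_connect st xV).
have arrows_rr : [set (rho' b.1, rho' b.2) | b in parrows T] = parrows T'.
  rewrite (arrows_repr rT) (arrows_repr rT') -imset_comp; apply: eq_in_imset => b.
  by rewrite inE => /andP[_ /path_arrow_in[b1 b2]]; rewrite /= !rr.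
split => //.
- move=> x y /(node_repr rT)[xV xx] /(node_repr rT)[yV yy] /eqP.
  by rewrite -same_block // xx yy => /eqP.
- apply/setP => z; rewrite (nodes_repr rT'); apply/imsetP/idP.
    case=> x /(node_repr rT)[xV _] ->.
    by rewrite inE (repr_in st' xV) (repr_idem st' xV) eqxx.
  rewrite inE => /andP[zV /eqP zz]; exists (rho z); first exact: (repr_node st rT zV).
  by rewrite rr.
- move=> x xT; have [xV xx] := node_repr rT xT.
  rewrite (labels_repr rT') ?(labels_repr rT) //; last exact: (repr_node st' rT' xV).
  rewrite /block_label; congr sub_label; apply/setP => z; rewrite !in_block.
  by case zV: (z \in V0) => //=; rewrite -(same_block _ _ zV xV) xx.
Qed.

Section Count.
Variables (N' : finType) (r' : ptree V N') (k : nat).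

Definition glue_tuples : {set k.-tuple (N * N)} :=
  [set a : k.-tuple (N * N) | fresh_arrows finset.set0 a &&
                               `[< iso_ptree (glue_end r (glue_arrows id a)) r' >]].

Lemma num_glue_seqs_card : num_glue_seqs r r' k = #|glue_seqs r r' k|.
Proof.
rewrite /num_glue_seqs (@eq_in_imset _ _ _ (fun s => [set s])).
  by rewrite card_imset //; apply: set1_inj.
move=> s sG; have gs : is_glue_seq r s by move: sG; rewrite inE => /asboolP[].
apply/setP => t; rewrite !inE.
apply/andP/eqP => [[_ /asboolP sid]|->].
  by apply/val_inj/esym; apply: glue_seq_ident_eq glue_state_id represents_id gs sid.
by split; [move: sG; rewrite inE | exact/asboolP/seq_ident_refl].
Qed.

Lemma card_glue_seqs : #|glue_seqs r r' k| = #|glue_tuples|.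
Proof.
have size_glue (a : k.-tuple (N * N)) : size (glue_arrows id a) == k.
  by rewrite size_glue_arrows size_tuple.
pose glue_tuple (a : k.-tuple (N * N)) := Tuple (size_glue a).
have -> : glue_seqs r r' k = glue_tuple @: glue_tuples.
  apply/setP => s; rewrite inE; apply/asboolP/imsetP => [[gs iso]|[a]].
    have [a fa as'] := glue_seq_arrows glue_state_id represents_id gs.
    have sa : size a == k by rewrite -(size_glue_arrows id a) as' size_tuple.
    exists (Tuple sa); last exact: val_inj.
    by rewrite inE fa; apply/asboolP; rewrite /= as'.
  rewrite inE => /andP[fa /asboolP iso] ->.
  by have [gs _ _] := glue_arrows_correct glue_state_id represents_id fa.
rewrite card_in_imset // => a b; rewrite !inE => /andP[fa _] /andP[fb _] /(congr1 val) ab.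
exact/val_inj/(glue_arrows_inj glue_state_id fa fb ab).
Qed.

(* Permuting the glued arrows changes neither the set of glued arrows nor,
   by [represents_iso], the final path up to isomorphism. *)
Lemma glue_tuples_perm (a b : k.-tuple (N * N)) :
  a \in glue_tuples -> perm_eq a b -> b \in glue_tuples.
Proof.
rewrite !inE => /andP[fa /asboolP[g g_iso]] ab.
have fb : fresh_arrows finset.set0 b.
  by rewrite /fresh_arrows -(perm_uniq ab) -(perm_all _ ab).
rewrite fb; apply/asboolP.
have [_ sta ra] := glue_arrows_correct glue_state_id represents_id fa.
have [_ stb rb] := glue_arrows_correct glue_state_id represents_id fb.
have ab_set : [set x in b] = [set x in a] by apply/setP => x; rewrite !inE (perm_mem ab).
rewrite ab_set in stb rb.
by exists (g \o merge_all id a); apply: iso_comp (represents_iso stb sta rb ra) g_iso.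
Qed.

End Count.
End Gluing.

Theorem lemma2p12 (V : Type) (E : set (hedge V)) (k : nat)
    (N N' : finType) (r : ptree V N) (r' : ptree V N') :
  higraph E -> (1 <= k)%N -> is_path E r -> is_path E r' ->
  (k`! %| num_glue_seqs r r' k)%N.
Proof.
move=> hE _ hr _.
rewrite (num_glue_seqs_card hE hr) (card_glue_seqs hE hr).
apply: dvdn_fact_card_perm_closed => [a|]; last exact: (glue_tuples_perm hE hr).
by rewrite inE => /andP[/andP[]].
Qed.
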